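(* Let $q$ be a non-negative integer and $\Lambda$ a unital commutative ring which is $q$-torsion-free. Let $\mathfrak f$ be a free Lie algebra over $\Lambda$ and $\xi^{\wedge}\colon\mathfrak f\wedge^q\mathfrak f\to\mathfrak f$ the homomorphism with $\xi^{\wedge}(x\wedge y)=[x,y]$ and $\xi^{\wedge}(\{x\})=qx$. Then $\xi^{\wedge}$ induces an isomorphism $\mathfrak f\curlywedge^q\mathfrak f\cong[\mathfrak f,\mathfrak f]$.
   Context: All Lie algebras are over $\Lambda$. For $q\ge1$, the non-abelian $q$-exterior square $\mathfrak g\wedge^q\mathfrak g$ is the Lie algebra generated by symbols $h\wedge g$ and $\{h\}$ ($h,g\in\mathfrak g$) subject to, for all $h,h',g,g'\in\mathfrak g$, $\lambda,\lambda'\in\Lambda$: (1) $\lambda(h\wedge g)=\lambda h\wedge g=h\wedge\lambda g$; (2),(3) additivity in each variable; (4) $[h,h']\wedge g=h\wedge[h',g]-h'\wedge[h,g]$; (5) $h\wedge[g,g']=[g',h]\wedge g-[g,h]\wedge g'$; (6) $[h\wedge g,h'\wedge g']=[h,g]\wedge[h',g']$; (7) $[\{h'\},h\wedge g]=[qh',h]\wedge g+h\wedge[qh',g]$; (8) $\{\lambda h+\lambda'h'\}=\lambda\{h\}+\lambda'\{h'\}$; (9) $[\{h\},\{h'\}]=qh\wedge qh'$; (10) $\{[h,g]\}=q(h\wedge g)$; (11) $h\wedge h=0$. For $q=0$, generated by the $h\wedge g$ subject to (1)–(6) and (11) (Ellis's exterior square $\mathfrak g\wedge\mathfrak g$, also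 defined this way for every $q$). $\mathfrak g\curlywedge^q\mathfrak g$ denotes the image of the natural homomorphism $\mathfrak g\wedge\mathfrak g\to\mathfrak g\wedge^q\mathfrak g$, $h\wedge g\mapsto h\wedge g$. *)

From HB Require Import structures.
From mathcomp Require Import all_boot all_order all_algebra.
Set Implicit Arguments. Unset Strict Implicit. Unset Printing Implicit Defensive.
Import GRing.Theory.
Local Open Scope ring_scope.

Record lieAlgebra (R : comPzRingType) := LieAlgebra {
  lie_mod :> lmodType R;
  lie_br : lie_mod -> lie_mod -> lie_mod;
  lie_brl : forall (a : R) (x y z : lie_mod),
      lie_br (a *: x + y) z = a *: lie_br x z + lie_br y z;
  lie_brr : forall (a : R) (x y z : lie_mod),
      lie_br z (a *: x + y) = a *: lie_br z x + lie_br z y;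
  lie_alt : forall x : lie_mod, lie_br x x = 0;
  lie_jacobi : forall x y z : lie_mod,
      lie_br x (lie_br y z) + lie_br y (lie_br z x) + lie_br z (lie_br x y) = 0
}.
Arguments lie_br {R} l x y.
Notation "[: x , y :]" := (lie_br _ x y) (format "[: x ,  y :]").

Section Defs.
Variable R : comPzRingType.

Definition is_lie_hom (L M : lieAlgebra R) (f : L -> M) : Prop :=
  (forall (a : R) (x y : L), f (a *: x + y) = a *: f x + f y) /\
  (forall x y : L, f [: x, y :] = [: f x, f y :]).

(* The derived subalgebra [L, L] : the R-span of all brackets
   (finite sums of brackets; R-multiples are absorbed since a[x,y] = [ax,y]). *)
Definition in_derived (L : lieAlgebra R) (z : L) : Prop :=
  exists s : seq (L * L), z = \sum_(p <- s) [: p.1, p.2 :].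

Definition is_free_lie (X : Type) (L : lieAlgebra R) (i : X -> L) : Prop :=
  forall (M : lieAlgebra R) (g : X -> M),
    (exists phi : L -> M, is_lie_hom phi /\ forall x, phi (i x) = g x) /\
    (forall phi psi : L -> M, is_lie_hom phi -> is_lie_hom psi ->
       (forall x, phi (i x) = psi (i x)) -> forall z, phi z = psi z).

(* Relations (1)-(6) and (11) for symbols h /\ g in M. *)
Definition wedge_rels (g M : lieAlgebra R) (w : g -> g -> M) : Prop :=
  (forall (a : R) h k, a *: w h k = w (a *: h) k /\ a *: w h k = w h (a *: k)) /\
        (forall h h' k, w (h + h') k = w h k + w h' k) /\
        (forall h k k', w h (k + k') = w h k + w h k') /\
        (forall h h' k, w [: h, h' :] k = w h [: h', k :] - w h' [: h, k :]) /\
        (forall h k k', w h [: k, k' :] = w [: k', h :] k - w [: k, h :] k') /\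
        (forall h k h' k', [: w h k, w h' k' :] = w [: h, k :] [: h', k' :])
    /\ (forall h, w h h = 0).

Definition q_rels (q : nat) (g M : lieAlgebra R) (w : g -> g -> M) (c : g -> M)
  : Prop :=
  [/\ (forall h' h k, [: c h', w h k :] = w [: h' *+ q, h :] k + w h [: h' *+ q, k :]),
      (forall (a a' : R) h h', c (a *: h + a' *: h') = a *: c h + a' *: c h'),
      (forall h h', [: c h, c h' :] = w (h *+ q) (h' *+ q))
    & (forall h k, c [: h, k :] = (w h k) *+ q)].

Definition is_ext_square (g W : lieAlgebra R) (w : g -> g -> W) : Prop :=
  wedge_rels w /\
  forall (M : lieAlgebra R) (w' : g -> g -> M), wedge_rels w' ->
    (exists phi : W -> M, is_lie_hom phi /\ forall h k, phi (w h k) = w' h k) /\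
    (forall phi psi : W -> M, is_lie_hom phi -> is_lie_hom psi ->
       (forall h k, phi (w h k) = psi (w h k)) -> forall z, phi z = psi z).

(* (W, w, c) is the non-abelian q-exterior square of g (w h k = h /\ k,
   c h = {h}).  For q = 0 it is Ellis's exterior square (c is irrelevant). *)
Definition is_qext_square (q : nat) (g W : lieAlgebra R)
    (w : g -> g -> W) (c : g -> W) : Prop :=
  if q == 0%N then is_ext_square w else
  [/\ wedge_rels w, q_rels q w c &
  forall (M : lieAlgebra R) (w' : g -> g -> M) (c' : g -> M),
    wedge_rels w' -> q_rels q w' c' ->
    (exists phi : W -> M, [/\ is_lie_hom phi,
        forall h k, phi (w h k) = w' h k & forall h, phi (c h) = c' h]) /\
    (forall phi psi : W -> M, is_lie_hom phi -> is_lie_hom psi ->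
       (forall h k, phi (w h k) = psi (w h k)) ->
       (forall h, phi (c h) = psi (c h)) -> forall z, phi z = psi z)].

Definition q_torsion_free (q : nat) : Prop :=
  q = 0%N \/ forall a : R, a *+ q = 0 -> a = 0.

End Defs.

From HB Require Import structures.
From mathcomp Require Import all_boot all_order all_algebra.
From mathcomp Require Import boolp.
Set Implicit Arguments. Unset Strict Implicit. Unset Printing Implicit Defensive.
Import GRing.Theory.
Local Open Scope ring_scope.

(* The composite [xi \o iota] is the commutator map [d : f /\ f -> f],
   [h /\ k |-> [h, k]].  Its image is [[f, f]] because [f /\ f] is spanned
   by the symbols [h /\ k].  For injectivity, relations (1)-(5), (11) say that
   [(h, k) |-> h /\ k] is a 2-cocycle of [f] with values in [f /\ f]; as [f]
   is free, the central extension of [f] it defines splits, which yields a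
   linear [sigma : f -> f /\ f] with [sigma [h, k] = h /\ k], a left inverse
   of [d].  So [d] is already injective, and so is the map induced on its
   image in [f /\^q f]: neither [q] nor torsion-freeness plays any role. *)

Lemma linear_fun_sum (R : pzRingType) (U V : lmodType R) (phi : U -> V) :
  linear phi ->
  forall (I : Type) (r : seq I) (F : I -> U),
    phi (\sum_(i <- r) F i) = \sum_(i <- r) phi (F i).
Proof.
move=> phi_lin I r F; pose Phi : {linear U -> V} :=
  HB.pack phi (GRing.isLinear.Build R U V *:%R phi phi_lin).
exact: (raddf_sum Phi r xpredT F).
Qed.

Lemma is_lie_hom_comp (R : comPzRingType) (L M N : lieAlgebra R)
    (phi : M -> N) (psi : L -> M) :
  is_lie_hom phi -> is_lie_hom psi -> is_lie_hom (phi \o psi).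
Proof.
move=> [phi_lin phi_br] [psi_lin psi_br]; split=> [a x y | x y] /=.
  by rewrite psi_lin phi_lin.
by rewrite psi_br phi_br.
Qed.

Section LieBracket.
Variables (R : comPzRingType) (L : lieAlgebra R).

HB.instance Definition _ (z : L) :=
  GRing.isLinear.Build R L L *:%R (lie_br L z) (fun a x y => lie_brr a x y z).

Lemma lie_brDl (x y z : L) : [: x + y, z :] = [: x, z :] + [: y, z :].
Proof. by have := lie_brl 1 x y z; rewrite !scale1r. Qed.

Lemma lie_brC (x y : L) : [: x, y :] = - [: y, x :].
Proof.
apply/eqP; rewrite -addr_eq0; have := lie_alt (x + y).
by rewrite lie_brDl !raddfD /= !lie_alt add0r addr0 => ->.
Qed.

Lemma lie_br_suml (I : Type) (r : seq I) (F : I -> L) (z : L) :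
  [: \sum_(i <- r) F i, z :] = \sum_(i <- r) [: F i, z :].
Proof.
rewrite lie_brC raddf_sum -sumrN; apply: eq_bigr => i _.
by rewrite [RHS]lie_brC.
Qed.

End LieBracket.

Section LieSubalgebra.
Variables (R : comPzRingType) (L : lieAlgebra R) (S : {pred L}).
Hypotheses (S_submod : subsemimod_closed S)
  (S_br : {in S &, forall x y, [: x, y :] \in S}).

HB.instance Definition _ := GRing.isSubmodClosed.Build R L S S_submod.

Definition lie_sub_type := {x : L | x \in S}.
HB.instance Definition _ := [isSub of lie_sub_type for @sval L (fun x => x \in S)].
HB.instance Definition _ := [Choice of lie_sub_type by <:].
HB.instance Definition _ := [SubChoice_isSubZmodule of lie_sub_type by <:].
HB.instance Definition _ := [SubZmodule_isSubLmodule of lie_sub_type by <:].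

Definition lie_sub_br (x y : lie_sub_type) : lie_sub_type :=
  Sub [: val x, val y :] (S_br (valP x) (valP y)).

Definition lie_sub : lieAlgebra R.
Proof.
refine (@LieAlgebra R lie_sub_type lie_sub_br _ _ _ _).
- by move=> a x y z; apply: val_inj; exact: lie_brl.
- by move=> a x y z; apply: val_inj; exact: lie_brr.
- by move=> x; apply: val_inj; exact: lie_alt.
- by move=> x y z; apply: val_inj; exact: lie_jacobi.
Defined.

End LieSubalgebra.

Section WedgeRelations.
Variables (R : comPzRingType) (g M : lieAlgebra R) (w : g -> g -> M).
Hypothesis w_rels : wedge_rels w.

Lemma wedge_linl (a : R) (x y z : g) : w (a *: x + y) z = a *: w x z + w y z.
Proof. by have [wZ [wDl _]] := w_rels; rewrite wDl -(wZ a x z).1. Qed.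

Lemma wedge_linr (a : R) (x y z : g) : w z (a *: x + y) = a *: w z x + w z y.
Proof. by have [wZ [_ [wDr _]]] := w_rels; rewrite wDr -(wZ a z x).2. Qed.

Lemma wedge_antisym (x y : g) : w x y = - w y x.
Proof.
have [_ [wDl [wDr [_ [_ [_ w_alt]]]]]] := w_rels.
apply/eqP; rewrite -addr_eq0; have := w_alt (x + y).
by rewrite wDl !wDr !w_alt add0r addr0 => ->.
Qed.

Lemma wedge_cocycle (x y z : g) :
  w x [: y, z :] + w y [: z, x :] + w z [: x, y :] = 0.
Proof.
have [wZ [_ [_ [_ [w_brr _]]]]] := w_rels.
have wNl u v : w (- u) v = - w u v by rewrite -scaleN1r -(wZ _ _ _).1 scaleN1r.
rewrite w_brr (wedge_antisym y) (wedge_antisym z) (lie_brC x y) wNl opprK.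
by rewrite addrAC subrK subrr.
Qed.

End WedgeRelations.

Section ExteriorSquare.
Variables (R : comPzRingType) (g E : lieAlgebra R) (w : g -> g -> E).
Hypothesis w_ext : is_ext_square w.

Lemma ext_square_subalgebra_full (S : {pred E}) (S_submod : subsemimod_closed S)
    (S_br : {in S &, forall x y, [: x, y :] \in S}) :
  (forall h k, w h k \in S) -> forall e, e \in S.
Proof.
move=> S_w e; have [w_rels w_univ] := w_ext.
have [wZ [wDl [wDr [w_brl [w_brr [w_br w_alt]]]]]] := w_rels.
pose wS h k : lie_sub S_submod S_br := Sub (w h k) (S_w h k).
have wS_rels : wedge_rels wS.
  split; [|split; [|split; [|split; [|split; [|split]]]]].
  - move=> a h k; have [wZl wZr] := wZ a h k.
    by split; apply: val_inj; [exact: wZl | exact: wZr].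
  - by move=> h h' k; apply: val_inj; exact: wDl.
  - by move=> h k k'; apply: val_inj; exact: wDr.
  - by move=> h h' k; apply: val_inj; exact: w_brl.
  - by move=> h k k'; apply: val_inj; exact: w_brr.
  - by move=> h k h' k'; apply: val_inj; exact: w_br.
  - by move=> h; apply: val_inj; exact: w_alt.
have [[phi [[phi_lin phi_br] phi_w]] _] := w_univ _ wS wS_rels.
have [_ w_uniq] := w_univ E w w_rels.
have val_phi_hom : is_lie_hom (fun x => val (phi x)).
  by split=> [a x y | x y]; rewrite ?phi_lin ?phi_br.
have -> : e = val (phi e).
  have id_hom : is_lie_hom (@id E) by [].
  by apply: (w_uniq _ _ id_hom val_phi_hom) => h k /=; rewrite phi_w.
exact: valP.
Qed.

Lemma ext_square_sum_wedges (e : E) :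
  exists s : seq (g * g), e = \sum_(p <- s) w p.1 p.2.
Proof.
have [wZ [_ [_ [_ [_ [w_br _]]]]]] := w_ext.1.
pose S : {pred E} :=
  fun x => `[< exists s : seq (g * g), x = \sum_(p <- s) w p.1 p.2 >].
have S_submod : subsemimod_closed S.
  split; [split|].
  - by apply/asboolP; exists nil; rewrite big_nil.
  - move=> _ _ /asboolP[s ->] /asboolP[t ->]; apply/asboolP.
    by exists (s ++ t); rewrite big_cat.
  - move=> a _ /asboolP[s ->]; apply/asboolP.
    exists [seq (a *: p.1, p.2) | p <- s]; rewrite big_map scaler_sumr.
    by apply: eq_bigr => p _; rewrite (wZ _ _ _).1.
have S_br : {in S &, forall x y, [: x, y :] \in S}.
  move=> _ _ /asboolP[s ->] /asboolP[t ->]; apply/asboolP.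
  exists [seq ([: p.1.1, p.1.2 :], [: p.2.1, p.2.2 :])
           | p <- [seq (p, p') | p <- s, p' <- t]].
  rewrite big_map big_allpairs lie_br_suml; apply: eq_bigr => p _.
  by rewrite raddf_sum; apply: eq_bigr => p' _ /=; rewrite w_br.
have S_w h k : w h k \in S.
  by apply/asboolP; exists ((h, k) :: nil); rewrite big_seq1.
exact/asboolP/(ext_square_subalgebra_full S_submod S_br S_w).
Qed.

End ExteriorSquare.

Section CocycleExtension.
Variables (R : comPzRingType) (g : lieAlgebra R) (M : lmodType R).
Variable omega : g -> g -> M.
Hypotheses
  (omega_linl : forall a x y z, omega (a *: x + y) z = a *: omega x z + omega y z)
  (omega_linr : forall a x y z, omega z (a *: x + y) = a *: omega z x + omega z y)
  (omega_alt : forall x, omega x x = 0)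
  (omega_cocycle : forall x y z,
     omega x [: y, z :] + omega y [: z, x :] + omega z [: x, y :] = 0).

Definition cocycle_ext_br (u v : M * g) : M * g :=
  (omega u.2 v.2, [: u.2, v.2 :]).

Definition cocycle_ext : lieAlgebra R.
Proof.
refine (@LieAlgebra R (M * g)%type cocycle_ext_br _ _ _ _).
- by move=> a x y z; rewrite /cocycle_ext_br /= omega_linl lie_brl.
- by move=> a x y z; rewrite /cocycle_ext_br /= omega_linr lie_brr.
- by move=> x; rewrite /cocycle_ext_br omega_alt lie_alt.
- move=> x y z; rewrite /cocycle_ext_br /=.
  by apply: injective_projections; rewrite /= ?omega_cocycle ?lie_jacobi.
Defined.

Lemma free_lie_cocycle_coboundary (X : Type) (i : X -> g) :
  is_free_lie i ->
  exists sigma : g -> M, linear sigma /\ forall x y, sigma [: x, y :] = omega x y.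
Proof.
move=> g_free.
have [[s [[s_lin s_br] s_i]] _] := g_free cocycle_ext (fun x => (0, i x)).
have [_ g_uniq] := g_free g i.
have s2_hom : is_lie_hom (fun x => (s x).2).
  by split=> [a x y | x y]; rewrite ?s_lin ?s_br.
have id_hom : is_lie_hom (@id g) by [].
have s2_id x : (s x).2 = x by apply: (g_uniq _ _ s2_hom id_hom) => y; rewrite s_i.
exists (fun x => (s x).1); split=> [a x y | x y]; first by rewrite s_lin.
by rewrite s_br /= !s2_id.
Qed.

End CocycleExtension.

Section CommutatorMap.
Variables (R : comPzRingType) (g E : lieAlgebra R) (w : g -> g -> E) (d : E -> g).
Hypotheses (w_ext : is_ext_square w) (d_hom : is_lie_hom d)
  (d_w : forall h k, d (w h k) = [: h, k :]).

Lemma commutator_map_sum_wedges (s : seq (g * g)) :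
  d (\sum_(p <- s) w p.1 p.2) = \sum_(p <- s) [: p.1, p.2 :].
Proof. by rewrite (linear_fun_sum d_hom.1); apply: eq_bigr => p _; rewrite d_w. Qed.

Lemma commutator_map_image (z : g) : in_derived z <-> exists e, d e = z.
Proof.
split=> [[s ->] | [e <-]].
  by exists (\sum_(p <- s) w p.1 p.2); rewrite commutator_map_sum_wedges.
have [s ->] := ext_square_sum_wedges w_ext e.
by exists s; rewrite commutator_map_sum_wedges.
Qed.

Lemma commutator_map_inj (X : Type) (i : X -> g) : is_free_lie i -> injective d.
Proof.
move=> g_free; have w_rels := w_ext.1.
have [_ [_ [_ [_ [_ [_ w_alt]]]]]] := w_rels.
have [sigma [sigma_lin sigma_br]] := free_lie_cocycle_coboundary
  (wedge_linl w_rels) (wedge_linr w_rels) w_alt (wedge_cocycle w_rels) g_free.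
apply: (@can_inj _ _ d sigma) => e.
have [s ->] := ext_square_sum_wedges w_ext e.
rewrite commutator_map_sum_wedges (linear_fun_sum sigma_lin).
by apply: eq_bigr => p _; rewrite sigma_br.
Qed.

End CommutatorMap.

Theorem lemma6p3 (R : comPzRingType) (q : nat) (X : Type)
    (f : lieAlgebra R) (i : X -> f)
    (E : lieAlgebra R) (wE : f -> f -> E)
    (W : lieAlgebra R) (wW : f -> f -> W) (c : f -> W)
    (xi : W -> f) (iota : E -> W) :
  q_torsion_free R q ->
  is_free_lie i ->
  is_ext_square wE ->
  is_qext_square q wW c ->
  is_lie_hom xi ->
  (forall x y, xi (wW x y) = [: x, y :]) ->
  ((0 < q)%N -> forall x, xi (c x) = x *+ q) ->
  is_lie_hom iota ->
  (forall x y, iota (wE x y) = wW x y) ->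
  (forall e e' : E, xi (iota e) = xi (iota e') -> iota e = iota e') /\
  (forall z : f, in_derived z <-> exists e : E, xi (iota e) = z).
Proof.
move=> _ f_free E_ext _ xi_hom xi_w _ iota_hom iota_w.
have d_hom : is_lie_hom (xi \o iota) by apply: is_lie_hom_comp.
have d_w x y : (xi \o iota) (wE x y) = [: x, y :] by rewrite /= iota_w xi_w.
split=> [e e' /(commutator_map_inj E_ext d_hom d_w f_free) -> // |].
exact: commutator_map_image E_ext d_hom d_w.
Qed.
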